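(* Let $d=2$, $X\sim\mathcal{N}(0,I_2)$ independent of $\beta$, $\bar\beta=(1,0)$ and $\beta=\bar\beta+\epsilon$ with $\epsilon=(1,-1)$ or $\epsilon=(-1,1)$ each with probability $1/2$ (so $\epsilon$ and $-\epsilon$ have the same distribution). Then no solution $\hat\beta^{\mathrm{RLHF}}$ of the moment equation $\mathbb{E}_X[\sigma(X^\top\hat\beta^{\mathrm{RLHF}})X]=\mathbb{E}_X[\mathbb{E}_\beta[\sigma(X^\top\beta)]X]$ is a scalar multiple of $\bar\beta$; in particular the RLHF estimator does not recover the direction of $\bar\beta$ even though the heterogeneity is symmetric. *)

From HB Require Import structures.
From mathcomp Require Import all_boot all_order all_algebra.
From mathcomp Require Import all_classical all_reals all_analysis.
Set Implicit Arguments. Unset Strict Implicit. Unset Printing Implicit Defensive.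
Import Order.TTheory GRing.Theory Num.Theory.
Local Open Scope ring_scope.

Definition sigmoid {R : realType} (t : R) : R := (1 + expR (- t))^-1.

Definition dot2 {R : realType} (x y : R * R) : R := x.1 * y.1 + x.2 * y.2.
Definition addv2 {R : realType} (x y : R * R) : R * R := (x.1 + y.1, x.2 + y.2).
Definition scalev2 {R : realType} (c : R) (x : R * R) : R * R := (c * x.1, c * x.2).

Definition gauss2 (R : realType) := (normal_prob (0:R) 1 \x normal_prob (0:R) 1)%E.

Arguments gauss2 R : clear implicits.

Definition betabar {R : realType} : R * R := (1, 0).
Definition eps0 {R : realType} : R * R := (1, -1).

(* E_beta[ sigma(x^T beta) ] with beta = betabar + eps, eps = +-eps0 w.p. 1/2 *)
Definition Ebeta_sigmoid {R : realType} (x : R * R) : R :=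
  2^-1 * sigmoid (dot2 x (addv2 betabar eps0))
  + 2^-1 * sigmoid (dot2 x (addv2 betabar (scalev2 (-1) eps0))).

From mathcomp Require Import all_boot all_order all_algebra.
From mathcomp Require Import all_classical all_reals all_analysis.
From mathcomp Require Import measurable_realfun ring lra.
Import Order.TTheory GRing.Theory Num.Theory.
Import numFieldNormedType.Exports.
Local Open Scope ring_scope.
Local Open Scope classical_set_scope.

(* The sign flips (x1, x2) |-> (-x1, x2) and (x1, x2) |-> (x1, -x2) preserve
   N(0, I_2).  For [bhat = c * betabar] the integrand sigmoid(c x1) x2 is odd in
   x2, so the second moment of the left-hand side vanishes.  Averaging the
   right-hand integrand over the four sign flips gives
   x2 * ((sigmoid x2 - sigmoid (-x2)) - (sigmoid (2x1 + x2) - sigmoid (2x1 - x2))),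
   which is nonnegative, and positive off the coordinate axes, because the
   sigmoid increases most over a window of given width when the window is
   centred at 0.  The axes are Gaussian-null, so the right-hand side is
   positive. *)

Definition symmetrize {T} {R : zmodType} (phi : T -> T) (h : T -> R) (x : T) : R :=
  h x + h (phi x).

Section invariant_measure.
Context {d} {T : measurableType d} {R : realType}.
Context {mu : {measure set T -> \bar R}} {phi : T -> T}.
Hypothesis mphi : measurable_fun [set: T] phi.
Hypothesis mu_phi : forall A, measurable A -> mu (phi @^-1` A) = mu A.

Let integral_pushforward_invariant (f : T -> \bar R) :
  (\int[pushforward mu phi]_x f x = \int[mu]_x f x)%E.
Proof. by apply: eq_measure_integral => /= A mA _; exact: mu_phi. Qed.

Lemma ge0_integral_comp_invariant (f : T -> \bar R) :
  measurable_fun [set: T] f -> (forall x, 0 <= f x)%E ->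
  (\int[mu]_x f (phi x) = \int[mu]_x f x)%E.
Proof.
by move=> mf f0; rewrite -[RHS]integral_pushforward_invariant ge0_integral_pushforward.
Qed.

Lemma integrable_comp_invariant {f : T -> \bar R} :
  mu.-integrable [set: T] f -> mu.-integrable [set: T] (f \o phi).
Proof.
move=> /integrableP[mf intf]; apply/integrableP; split; first exact: measurableT_comp.
suff -> : (\int[mu]_x `|(f \o phi) x| = \int[mu]_x `|f x|)%E by [].
apply: (@ge0_integral_comp_invariant (abse \o f)) => [|x]; last exact: abse_ge0.
by apply: measurableT_comp => //; exact: mf.
Qed.

Lemma integral_comp_invariant {f : T -> \bar R} :
  mu.-integrable [set: T] f -> (\int[mu]_x f (phi x) = \int[mu]_x f x)%E.
Proof.
move=> intf; rewrite -[RHS]integral_pushforward_invariant integral_pushforward //.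
- exact: (measurable_int mu).
- exact: integrable_comp_invariant.
Qed.

Lemma integral_odd_invariant {h : T -> R} :
  mu.-integrable [set: T] (EFin \o h) -> (forall x, h (phi x) = - h x) ->
  (\int[mu]_x (h x)%:E = 0)%E.
Proof.
move=> inth hN; have := integral_comp_invariant inth.
under eq_integral do rewrite /= hN -mulN1r EFinM.
rewrite integralZl //.
move: (integrable_fin_num measurableT inth); rewrite /=.
case: (\int[mu]_x (h x)%:E)%E => //= r _ /eqP; rewrite -EFinM eqe => /eqP rE.
by congr EFin; lra.
Qed.

Lemma measurable_symmetrize (h : T -> R) :
  measurable_fun [set: T] h -> measurable_fun [set: T] (symmetrize phi h).
Proof. by move=> mh; apply: measurable_funD => //; exact: measurableT_comp. Qed.

Lemma integrable_symmetrize {h : T -> R} :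
  mu.-integrable [set: T] (EFin \o h) ->
  mu.-integrable [set: T] (EFin \o symmetrize phi h).
Proof.
move=> inth.
have -> : EFin \o symmetrize phi h = (EFin \o h) \+ ((EFin \o h) \o phi).
  by apply: boolp.funext => x; rewrite /= /symmetrize EFinD.
exact: integrableD (integrable_comp_invariant inth).
Qed.

Lemma integral_symmetrize {h : T -> R} :
  mu.-integrable [set: T] (EFin \o h) ->
  (\int[mu]_x (symmetrize phi h x)%:E = 2%:E * \int[mu]_x (h x)%:E)%E.
Proof.
move=> inth; under eq_integral do rewrite EFinD.
rewrite (integralD measurableT inth (integrable_comp_invariant inth)).
rewrite (integral_comp_invariant inth).
move: (integrable_fin_num measurableT inth); rewrite /=.
by case: (\int[mu]_x (h x)%:E)%E => //= r _; rewrite -EFinD -EFinM mulr2n mulrDl mul1r.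
Qed.

End invariant_measure.

Lemma ge0_integral_gt0 {d} {T : measurableType d} {R : realType}
    {mu : {measure set T -> \bar R}} {N : set T} {f : T -> R} :
  mu [set: T] != 0%E -> mu.-negligible N -> measurable_fun [set: T] f ->
  (forall x, 0 <= f x) -> (forall x, ~ N x -> 0 < f x) ->
  (0 < \int[mu]_x (f x)%:E)%E.
Proof.
move=> muT0 negN mf f0 f_gt0.
rewrite lt0e integral_ge0 ?andbT; last by move=> x _; rewrite lee_fin.
apply: contra muT0 => /eqP intf0.
have mEf : measurable_fun [set: T] (EFin \o f) by exact/measurable_EFinP.
have /(ae_eq_integral_abs mu measurableT mEf).1 negf :
    (\int[mu]_x `|(f x)%:E| = 0)%E.
  by rewrite -intf0; apply: eq_integral => x _; rewrite gee0_abs ?lee_fin.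
apply/eqP/(measure_negligible measurableT)/(negligibleS _ (negligibleU negf negN)).
move=> x _; have [Nx|Nx] := pselect (N x); [by right|left].
by move=> /(_ I) /= /eqP; rewrite eqe gt_eqF ?f_gt0.
Qed.

Section product_invariance.
Context d1 d2 (T1 : measurableType d1) (T2 : measurableType d2) (R : realType).
Variables (P1 : {sigma_finite_measure set T1 -> \bar R})
  (P2 : {sigma_finite_measure set T2 -> \bar R}).
Variables (f1 : T1 -> T1) (f2 : T2 -> T2).
Hypotheses (mf1 : measurable_fun [set: T1] f1) (mf2 : measurable_fun [set: T2] f2).
Hypotheses (P1f1 : forall A, measurable A -> P1 (f1 @^-1` A) = P1 A)
  (P2f2 : forall B, measurable B -> P2 (f2 @^-1` B) = P2 B).

Lemma measurable_fun_prod_map :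
  measurable_fun [set: T1 * T2] (fun x => (f1 x.1, f2 x.2)).
Proof. by apply: measurable_fun_pair; apply: measurableT_comp. Qed.

Lemma product_measure_invariant (X : set (T1 * T2)) : measurable X ->
  (P1 \x P2)%E ((fun x => (f1 x.1, f2 x.2)) @^-1` X) = (P1 \x P2)%E X.
Proof.
move=> mX; apply/esym.
apply: (@product_measure_unique _ _ _ _ _ P1 P2
  (pushforward (P1 \x P2)%E (fun x => (f1 x.1, f2 x.2)))); last exact: mX.
  exact: measurable_fun_prod_map.
move=> ? A B mA mB; rewrite /pushforward.
transitivity ((P1 \x P2)%E (f1 @^-1` A `*` f2 @^-1` B)).
  by congr ((P1 \x P2)%E _); apply/seteqP; split => -[].
have mA' : measurable (f1 @^-1` A) by rewrite -[X in measurable X]setTI; exact: mf1.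
have mB' : measurable (f2 @^-1` B) by rewrite -[X in measurable X]setTI; exact: mf2.
by rewrite product_measure1E //; congr (_ * _)%E; [exact: P1f1 | exact: P2f2].
Qed.

End product_invariance.

Lemma integrable_product_snd d1 d2 (T1 : measurableType d1) (T2 : measurableType d2)
    (R : realType) (P1 : probability T1 R) (P2 : {sigma_finite_measure set T2 -> \bar R})
    (f : T2 -> \bar R) :
  P2.-integrable [set: T2] f -> (P1 \x P2)%E.-integrable [set: T1 * T2] (f \o snd).
Proof.
move=> /integrableP[mf intf]; apply/integrableP; split.
  by apply: measurableT_comp => //; exact: measurable_snd.
suff -> : (\int[(P1 \x P2)%E]_x `|(f \o snd) x| = \int[P2]_y `|f y|)%E by [].
transitivity (\int[pushforward (P1 \x P2)%E snd]_y `|f y|)%E.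
  rewrite ge0_integral_pushforward //.
  by change (measurable_fun setT (abse \o f)); apply: measurableT_comp => //; exact: mf.
apply: eq_measure_integral => /= B mB _; rewrite /pushforward.
transitivity ((P1 \x P2)%E ([set: T1] `*` B)).
  by apply: congr1; apply/seteqP; split=> -[x y] //= [].
rewrite product_measure1E //.
by transitivity (1 * P2 B)%E; [congr (_ * _)%E; exact: probability_setT | exact: mul1e].
Qed.

Section normal_distribution.
Context (R : realType).
Local Notation mu := (@lebesgue_measure R).

Lemma ge0_integral_normal_prob (m s : R) (f : R -> \bar R) :
  measurable_fun [set: R] f -> (forall x, 0 <= f x)%E ->
  (\int[normal_prob m s]_x f x = \int[mu]_x (f x * (normal_pdf m s x)%:E))%E.
Proof.
move=> mf f0; have dom := normal_prob_dominates m s.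
have int_dens := Radon_Nikodym_SigmaFinite.f_integrable dom.
rewrite -(Radon_Nikodym_SigmaFinite.change_of_variables dom) //.
apply: ae_eq_integral => //.
- by apply: emeasurable_funM => //; exact: (measurable_int mu).
- by apply: emeasurable_funM => //; apply/measurable_EFinP; exact: measurable_normal_pdf.
apply: ae_eqe_mul2l; apply: integral_ae_eq => //.
- by apply/measurable_EFinP; exact: measurable_normal_pdf.
- move=> E _ mE; rewrite -Radon_Nikodym_SigmaFinite.f_integral //; exact: normal_prob_dominates.
Qed.

Lemma normal_pdfN (s x : R) : s != 0 -> normal_pdf 0 s (- x) = normal_pdf 0 s x.
Proof. by move=> s0; rewrite !normal_pdfE // /normal_fun !subr0 sqrrN. Qed.

Lemma normal_probN (s : R) (A : set R) : s != 0 -> measurable A ->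
  normal_prob 0 s (-%R @^-1` A) = normal_prob 0 s A.
Proof.
move=> s0 mA; rewrite /normal_prob.
transitivity (\int[mu]_(x in (-%R : _ -> measurableTypeR R) @^-1` A)
    ((fun y => (normal_pdf 0 s y)%:E) \o -%R) x)%E.
  by apply: eq_integral => x _ /=; rewrite normal_pdfN.
rewrite -ge0_integral_pushforward //.
- by apply: eq_measure_integral => /= B mB _; exact: lebesgue_measureN.
- by apply: measurableT_comp => //; apply: measurable_funTS; exact: measurable_normal_pdf.
- by move=> y _; rewrite lee_fin normal_pdf_ge0.
Qed.

Lemma normal_prob_set1 (m s a : R) : normal_prob m s [set a] = 0%E.
Proof.
apply: (null_content_dominatesP _ _).1 (normal_prob_dominates m s) _ _ _ => //.
exact: lebesgue_measure_set1.
Qed.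

Lemma normr_mul_normal_pdf_le (x : R) :
  `|x| * normal_pdf 0 1 x <= normal_peak 1 / normal_peak 2 * normal_pdf 0 2 x.
Proof.
rewrite !normal_pdfE ?oner_neq0 ?pnatr_eq0 //.
have peak2 : normal_peak (2 : R) != 0 by rewrite gt_eqF // normal_peak_gt0 // pnatr_eq0.
rewrite [leRHS]mulrA divfK // mulrCA ler_pM2l ?normal_peak_gt0 ?oner_neq0 //.
rewrite /normal_fun !subr0.
have -> : - x ^+ 2 / (2 ^+ 2 *+ 2) = - x ^+ 2 / (1 ^+ 2 *+ 2) + 3 / 8 * x ^+ 2 :> R
  by field.
(* |x| <= 1 + 3 x^2 / 8 <= expR (3 x^2 / 8) *)
rewrite expRD mulrC ler_pM2l ?expR_gt0 //; apply: le_trans (expR_ge1Dx _).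
have : 0 <= (`|x| - 4 / 3) ^+ 2 by exact: sqr_ge0.
by rewrite -(real_normK (num_real x)); nra.
Qed.

Lemma integrable_normal_normr :
  (normal_prob (0 : R) 1).-integrable [set: R] (fun x : R => (`|x|)%:E).
Proof.
have mnorm : measurable_fun [set: R] (fun x : R => (`|x|)%:E).
  by apply/measurable_EFinP; exact: normr_measurable.
apply/integrableP; split => //.
under eq_integral do rewrite /= normr_id.
rewrite ge0_integral_normal_prob //.
apply: (@le_lt_trans _ _ (\int[mu]_x
    ((normal_peak 1 / normal_peak 2)%:E * (normal_pdf 0 2 x)%:E))%E).
  apply: ge0_le_integral => //.
  - by move=> x _; rewrite mule_ge0 // lee_fin normal_pdf_ge0.
  - by apply: emeasurable_funM => //; apply/measurable_EFinP; exact: measurable_normal_pdf.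
  - by apply: emeasurable_funM => //; apply/measurable_EFinP; exact: measurable_normal_pdf.
  - by move=> x _; rewrite -!EFinM lee_fin normr_mul_normal_pdf_le.
rewrite ge0_integralZl //.
- by rewrite integral_normal_pdf mule1 ltry.
- by apply/measurable_EFinP; exact: measurable_normal_pdf.
- by move=> x _; rewrite lee_fin normal_pdf_ge0.
- by rewrite lee_fin divr_ge0 // normal_peak_ge0.
Qed.

End normal_distribution.

Section sigmoid.
Context {R : realType}.
Implicit Types t b : R.

Lemma sigmoidN t : sigmoid (- t) = 1 - sigmoid t.
Proof.
rewrite /sigmoid opprK expRN.
have e0 := expR_gt0 t.
by field; rewrite !gt_eqF ?addr_gt0.
Qed.

Lemma sigmoid_ge0 t : 0 <= sigmoid t.
Proof. by rewrite /sigmoid invr_ge0 addr_ge0 ?expR_ge0. Qed.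

Lemma sigmoid_le1 t : sigmoid t <= 1.
Proof. by rewrite /sigmoid invf_le1 ?addr_gt0 ?expR_gt0 // lerDl expR_ge0. Qed.

Lemma continuous_sigmoid : continuous (@sigmoid R).
Proof.
move=> t; apply: (@continuousV _ _ (fun t => 1 + expR (- t))).
  by rewrite gt_eqF // addr_gt0 // expR_gt0.
apply: cvgD; first exact: cvg_cst.
apply: continuous_comp; [exact: (@continuousN _ R^o) | exact: continuous_expR].
Qed.

Lemma measurable_sigmoid : measurable_fun [set: R] (@sigmoid R).
Proof. exact: continuous_measurable_fun continuous_sigmoid. Qed.

Definition sigmoid_gap t b :=
  (sigmoid b - sigmoid (- b)) - (sigmoid (t + b) - sigmoid (t - b)).

Lemma sigmoid_gapE t b : sigmoid_gap t b =
  (expR b - 1) * expR b * (expR t - 1) ^+ 2 /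
  ((expR b + 1) * (expR b * expR t + 1) * (expR b + expR t)).
Proof.
rewrite /sigmoid_gap /sigmoid opprK !opprD opprK !expRD !expRN.
have U0 := expR_gt0 b; have V0 := expR_gt0 t.
set U := expR b; set V := expR t.
field; apply/and5P; split; apply: lt0r_neq0;
  by rewrite ?addr_gt0 ?mulr_gt0 ?invr_gt0 ?ltr01.
Qed.

Lemma mulr_expR_sub1_ge0 b : 0 <= b * (expR b - 1).
Proof.
have [b0|b0] := leP 0 b.
  by rewrite mulr_ge0 // subr_ge0 -expR0 ler_expR.
by apply: mulr_le0; rewrite ?subr_le0 -?expR0 ?ler_expR ltW.
Qed.

Lemma mulr_expR_sub1_gt0 b : b != 0 -> 0 < b * (expR b - 1).
Proof.
move=> b0; have [b_lt0|b_gt0|b_eq0] := ltgtP b 0; last by rewrite b_eq0 eqxx in b0.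
  by rewrite nmulr_rgt0 // subr_lt0 expR_lt1.
by rewrite mulr_gt0 // subr_gt0 expR_gt1.
Qed.

Let sigmoid_gap_den_gt0 t b :
  0 < (expR b + 1) * (expR b * expR t + 1) * (expR b + expR t).
Proof.
by apply: mulr_gt0; [apply: mulr_gt0|]; apply: addr_gt0; rewrite ?mulr_gt0 ?expR_gt0.
Qed.

Lemma mulr_sigmoid_gap_ge0 t b : 0 <= b * sigmoid_gap t b.
Proof.
rewrite sigmoid_gapE 3!mulrA; apply: divr_ge0; last exact: ltW.
by rewrite mulr_ge0 ?sqr_ge0 // mulr_ge0 ?mulr_expR_sub1_ge0 ?expR_ge0.
Qed.

Lemma mulr_sigmoid_gap_gt0 t b : t != 0 -> b != 0 -> 0 < b * sigmoid_gap t b.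
Proof.
move=> t0 b0; have V1 : 0 < (expR t - 1) ^+ 2.
  by rewrite exprn_even_gt0 //= subr_eq0 -expR0 (inj_eq (@expR_inj R)).
rewrite sigmoid_gapE 3!mulrA divr_gt0 //.
by rewrite mulr_gt0 // mulr_gt0 ?mulr_expR_sub1_gt0 ?expR_gt0.
Qed.

End sigmoid.

Section gauss2.
Context {R : realType}.
Local Notation T := (measurableTypeR R).
Local Notation G := (gauss2 R).

Definition negfst (x : T * T) : T * T := (- x.1, x.2).
Definition negsnd (x : T * T) : T * T := (x.1, - x.2).

Lemma measurable_negfst : measurable_fun [set: T * T] negfst.
Proof.
by apply: (@measurable_fun_prod_map _ _ T T -%R id) => //; exact: oppr_measurable.
Qed.

Lemma measurable_negsnd : measurable_fun [set: T * T] negsnd.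
Proof.
by apply: (@measurable_fun_prod_map _ _ T T id -%R) => //; exact: oppr_measurable.
Qed.

Lemma gauss2_negfst (X : set (T * T)) : measurable X -> G (negfst @^-1` X) = G X.
Proof.
apply: (@product_measure_invariant _ _ T T R _ _ -%R id) => // A mA.
exact: normal_probN (oner_neq0 _) mA.
Qed.

Lemma gauss2_negsnd (X : set (T * T)) : measurable X -> G (negsnd @^-1` X) = G X.
Proof.
apply: (@product_measure_invariant _ _ T T R _ _ id -%R) => // A mA.
exact: normal_probN (oner_neq0 _) mA.
Qed.

Lemma gauss2_setT : G [set: T * T] = 1%E.
Proof.
rewrite /gauss2 -setXTT product_measure1E //.
by transitivity (1 * 1 : \bar R)%E; [congr (_ * _)%E; exact: probability_setT | exact: mul1e].
Qed.

Lemma gauss2_axes_negligible : G.-negligible [set x | x.1 = 0 \/ x.2 = 0].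
Proof.
have N0 a : normal_prob (0 : R) 1 [set a] = 0%E by exact: normal_prob_set1.
have negl (A B : set T) : measurable A -> measurable B ->
    (normal_prob (0 : R) 1 A = 0 \/ normal_prob (0 : R) 1 B = 0)%E ->
    G.-negligible (A `*` B).
  move=> mA mB AB0; exists (A `*` B); split => //; first exact: measurableX.
  rewrite /gauss2 product_measure1E //.
  case: AB0 => AB0.
    by transitivity (0 * normal_prob 0 1 B)%E; [congr (_ * _)%E | exact: mul0e].
  by transitivity (normal_prob 0 1 A * 0)%E; [congr (_ * _)%E | exact: mule0].
apply: (negligibleS _ (negligibleU (negl [set 0] setT _ _ _) (negl setT [set 0] _ _ _)));
  rewrite ?N0; auto.
by move=> [a b] /= [->|->]; [left|right].
Qed.

Lemma integrable_gauss2_le_snd (h : T * T -> R) : measurable_fun [set: T * T] h ->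
  (forall x, `|h x| <= `|x.2|) -> G.-integrable [set: T * T] (EFin \o h).
Proof.
move=> mh h_le.
apply: (@le_integrable _ _ _ G _ _ _ (fun x : T * T => `|x.2|%:E)) => //.
- exact/measurable_EFinP.
- by move=> x _ /=; rewrite lee_fin normr_id h_le.
- exact: (@integrable_product_snd _ _ T T R (normal_prob 0 1) _ _ (@integrable_normal_normr R)).
Qed.

End gauss2.

Section rlhf_moment.
Context (R : realType).
Local Notation T := (measurableTypeR R).
Local Notation G := (gauss2 R).

Lemma measurable_dot2 (v : R * R) :
  measurable_fun [set: T * T] (fun x : T * T => dot2 x v).
Proof.
by apply: measurable_funD; apply: measurable_funM.
Qed.

Lemma Ebeta_sigmoidE (x : R * R) :
  Ebeta_sigmoid x = 2^-1 * sigmoid (2 * x.1 - x.2) + 2^-1 * sigmoid x.2.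
Proof.
rewrite /Ebeta_sigmoid /dot2 /addv2 /scalev2 /betabar /eps0 /=.
by congr (_ * sigmoid _ + _ * sigmoid _); ring.
Qed.

Lemma Ebeta_sigmoid_ge0 (x : R * R) : 0 <= Ebeta_sigmoid x.
Proof. by rewrite Ebeta_sigmoidE addr_ge0 // mulr_ge0 ?sigmoid_ge0. Qed.

Lemma Ebeta_sigmoid_le1 (x : R * R) : Ebeta_sigmoid x <= 1.
Proof.
have := sigmoid_le1 (2 * x.1 - x.2); have := sigmoid_le1 x.2.
by rewrite Ebeta_sigmoidE; lra.
Qed.

Definition Ebeta_moment2 (x : T * T) : R := Ebeta_sigmoid x * x.2.

Lemma measurable_Ebeta_moment2 : measurable_fun [set: T * T] Ebeta_moment2.
Proof.
apply: measurable_funM; last exact: measurable_snd.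
by apply: measurable_funD; apply: measurable_funM => //;
  apply: measurableT_comp; [exact: measurable_sigmoid | exact: measurable_dot2
                           |exact: measurable_sigmoid | exact: measurable_dot2].
Qed.

Lemma integrable_Ebeta_moment2 : G.-integrable [set: T * T] (EFin \o Ebeta_moment2).
Proof.
apply: integrable_gauss2_le_snd; first exact: measurable_Ebeta_moment2.
move=> x; rewrite normrM -[leRHS]mul1r ler_wpM2r //.
by rewrite ger0_norm ?Ebeta_sigmoid_ge0 ?Ebeta_sigmoid_le1.
Qed.

Lemma Ebeta_moment2_sym (x : T * T) :
  symmetrize negsnd (symmetrize negfst Ebeta_moment2) x =
  x.2 * sigmoid_gap (2 * x.1) x.2.
Proof.
case: x => a b; rewrite /symmetrize /Ebeta_moment2 /negfst /negsnd /sigmoid_gap /=.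
rewrite !Ebeta_sigmoidE /=.
have -> : 2 * - a - b = - (2 * a + b) by ring.
have -> : 2 * a - - b = 2 * a + b by ring.
have -> : 2 * - a - - b = - (2 * a - b) by ring.
by rewrite !sigmoidN; field.
Qed.

Lemma integral_Ebeta_moment2_gt0 : (0 < \int[G]_x (Ebeta_moment2 x)%:E)%E.
Proof.
have int1 := integrable_Ebeta_moment2.
have int2 := integrable_symmetrize measurable_negfst gauss2_negfst int1.
have msym : measurable_fun [set: T * T] (symmetrize negsnd (symmetrize negfst Ebeta_moment2)).
  apply: measurable_symmetrize; first exact: measurable_negsnd.
  by apply: measurable_symmetrize; [exact: measurable_negfst | exact: measurable_Ebeta_moment2].
have G1 : G [set: T * T] != 0%E by rewrite gauss2_setT onee_neq0.
have sym_ge0 x : 0 <= symmetrize negsnd (symmetrize negfst Ebeta_moment2) x.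
  by rewrite Ebeta_moment2_sym mulr_sigmoid_gap_ge0.
have sym_gt0 x : ~ (x.1 = 0 \/ x.2 = 0) ->
    0 < symmetrize negsnd (symmetrize negfst Ebeta_moment2) x.
  move=> /not_orP[/eqP x1 /eqP x2].
  by rewrite Ebeta_moment2_sym mulr_sigmoid_gap_gt0 // mulf_neq0 ?pnatr_eq0.
have := ge0_integral_gt0 G1 gauss2_axes_negligible msym sym_ge0 sym_gt0.
rewrite (integral_symmetrize measurable_negsnd gauss2_negsnd int2).
rewrite (integral_symmetrize measurable_negfst gauss2_negfst int1).
move: (integrable_fin_num measurableT int1) => /=.
by case: (\int[G]_x (Ebeta_moment2 x)%:E)%E => //= r _; rewrite -!EFinM !lte_fin; lra.
Qed.

Lemma integral_sigmoid_betabar_moment2 (c : R) :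
  (\int[G]_x (sigmoid (dot2 x (scalev2 c betabar)) * x.2)%:E = 0)%E.
Proof.
apply: (integral_odd_invariant measurable_negsnd gauss2_negsnd).
  apply: integrable_gauss2_le_snd.
    apply: measurable_funM; last exact: measurable_snd.
    exact: measurableT_comp measurable_sigmoid (measurable_dot2 _).
  move=> x; rewrite normrM -[leRHS]mul1r ler_wpM2r //.
  by rewrite ger0_norm ?sigmoid_ge0 ?sigmoid_le1.
move=> [a b]; rewrite /negsnd /dot2 /scalev2 /betabar /=.
by rewrite !mulr0 !addr0 mulrN.
Qed.

End rlhf_moment.

Theorem mainTheorem9 (R : realType) (bhat : R * R) :
  (\int[gauss2 R]_x (sigmoid (dot2 x bhat) * x.1)%:E
     = \int[gauss2 R]_x (Ebeta_sigmoid x * x.1)%:E)%E ->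
  (\int[gauss2 R]_x (sigmoid (dot2 x bhat) * x.2)%:E
     = \int[gauss2 R]_x (Ebeta_sigmoid x * x.2)%:E)%E ->
  ~ (exists c : R, bhat = scalev2 c betabar).
Proof.
(* the second coordinate of the moment equation already fails *)
move=> _ moment2 [c bhatE].
have := integral_Ebeta_moment2_gt0 R.
by rewrite /Ebeta_moment2 -moment2 bhatE integral_sigmoid_betabar_moment2 ltxx.
Qed.
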